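(* For any realization of a run of Algorithm 4 (described in the context) under the standing assumption, the number of unsuccessful iterations performed before termination is either zero or else satisfies \[ |\mathcal{U}|\ \le\ \Big\lfloor 1+\log_{\gamma_1}\Big(\tfrac{3(1-\eta)}{2L_H\delta_{\max}}\Big)+\log_{\gamma_1}(\epsilon_H)\Big\rfloor\,(|\mathcal{S}|+1). \]
   Context: Let $f:\mathbb{R}^n\to\mathbb{R}$ with gradient $g=\nabla f$ and Hessian $H=\nabla^2f$; $\|\cdot\|$ is the Euclidean norm, $\lambda_{\min}$ the smallest eigenvalue, $\mathbb{S}^n$ the real symmetric $n\times n$ matrices. Write $f_k=f(x_k)$, $g_k=g(x_k)$, $H_k=H(x_k)$, $m_k(x)=f_k+g_k^T(x-x_k)+\tfrac12(x-x_k)^TH_k(x-x_k)$. Exact arithmetic is assumed. Algorithm 2 (truncated CG; inputs nonzero $g$, $H\in\mathbb{S}^n$, $\epsilon>0$, $\delta>0$, $\zeta\in(0,1)$, flag capCG, and $M\ge\|H\|$): $k_{\max}=\min\{n,\tfrac12\sqrt{\kappa}\ln(4\kappa^{3/2}/\zeta)\}$ with $\kappa=(M+2\epsilon)/\epsilon$ if capCG is true, else $k_{\max}=n$. Set $y_0=0,r_0=g,p_0=-g,j=0$. While $j<k_{\max}$: if $p_j^T(H+2\epsilon I)p_j\le\epsilon\|p_j\|^2$, return $s=y_j+\sigma p_j$ with $\sigma\ge0$, $\|s\|=\delta$, flag BND-NEG; set $\alpha_j=\|r_j\|^2/(p_j^T(H+2\epsilon I)p_j)$, $y_{j+1}=y_j+\alpha_jp_j$;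 if $\|y_{j+1}\|\ge\delta$, return $s=y_j+\sigma p_j$ with $\sigma\ge0$, $\|s\|=\delta$, flag BND-NORM; set $r_{j+1}=r_j+\alpha_j(H+2\epsilon I)p_j$; if $\|r_{j+1}\|\le\tfrac\zeta2\min\{\|g\|,\epsilon\|y_{j+1}\|\}$, return $s=y_{j+1}$, flag INT-RES; set $\beta_{j+1}=\|r_{j+1}\|^2/\|r_j\|^2$, $p_{j+1}=-r_{j+1}+\beta_{j+1}p_j$, $j\leftarrow j+1$. On loop exit return $s=y_j$, flag INT-MAX. Algorithm 3 (minimum eigenvalue oracle, MEO; inputs $g$, $H\in\mathbb{S}^n$, $\epsilon>0$, $\delta>0$, $\xi\in(0,1)$, $M\ge\|H\|$): a possibly randomized procedure that either returns $s=\pm\delta v$ with $\|v\|=1$, $v^THv\le-\epsilon/2$, satisfying $g^Ts\le0$, $s^THs\le-\tfrac12\epsilon\|s\|^2$, $\|s\|=\delta$, or returns an indication that $H\succeq-\epsilon I$. Algorithm 4 (inexact trust-region Newton-CG). Inputs: $\epsilon_g,\epsilon_H>0$; $\gamma_1\in(0,1)$, $\gamma_2\ge1$, $\psi\in(1/\gamma_2,1]$; $x_0$; $\delta_0>0$; $\delta_{\max}\ge\delta_0$; $\eta\in(0,1)$; $\zeta\in(0,1)$; $\xi\in[0,1)$; capCG; $M\ge L_g$. For $k=0,1,\dots$: evaluate $g_k,H_k$. If $g_k\ne0$, call Algorithm 2 with $(g_k,H_k,\epsilon_H,\delta_k,\zeta,\text{capCG},M)$ obtaining $s_k^{CG}$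 and flag outCG; else set $s_k^{CG}=0$, outCG$=$INT-RES. If outCG$\in\{$BND-NEG, BND-NORM$\}$ or ($\|g_k\|>\epsilon_g$ and outCG$=$INT-RES), set $s_k=s_k^{CG}$. Otherwise call Algorithm 3 with $(g_k,H_k,\epsilon_H,\delta_k,\xi,M)$; if it indicates $H_k\succeq-\epsilon_HI$, return $x_k$ (terminate), else take its output as $s_k$. Set $\rho_k=\frac{f_k-f(x_k+s_k)}{m_k(x_k)-m_k(x_k+s_k)}$. If $\rho_k\ge\eta$: $x_{k+1}=x_k+s_k$ and $\delta_{k+1}=\min\{\gamma_2\delta_k,\delta_{\max}\}$ if $\|s_k\|\ge\psi\delta_k$, else $\delta_{k+1}=\delta_k$. If $\rho_k<\eta$: $x_{k+1}=x_k$, $\delta_{k+1}=\gamma_1\|s_k\|$. $\mathcal{K}$ is the set of indices $k$ such that iteration $k$ is completed without termination (for the given realization); $\mathcal{S}=\{k\in\mathcal{K}:\rho_k\ge\eta\}$, $\mathcal{U}=\{k\in\mathcal{K}:\rho_k<\eta\}$. Standing assumption: $\{f_k\}$ is bounded below by some $f_{\rm low}\in\mathbb{R}$, and all segments $[x_k,x_k+s_k]$ lie in an open set on which $f$ is twice continuously differentiable with gradient Lipschitz with constant $L_g>0$ and Hessian Lipschitz with constant $L_H>0$. *)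

From HB Require Import structures.
From mathcomp Require Import all_boot all_order all_algebra.
From mathcomp Require Import all_classical all_reals all_analysis.
Set Implicit Arguments. Unset Strict Implicit. Unset Printing Implicit Defensive.
Import Order.TTheory GRing.Theory Num.Theory.
Import numFieldTopology.Exports numFieldNormedType.Exports.
Local Open Scope ring_scope.
Local Open Scope classical_set_scope.

Section Alg.
Variables (R : realType) (n : nat).
Notation vec := 'cV[R]_n.
Notation mat := 'M[R]_n.

Definition dot (u v : vec) : R := (u^T *m v) 0 0.
Definition enorm (v : vec) : R := Num.sqrt (dot v v).

(* "||A|| <= c" for the spectral (induced Euclidean) norm of a matrix:
   sup_{v <> 0} ||A v|| / ||v|| <= c, written out *)
Definition opnorm_le (A : mat) (c : R) : Prop :=
  forall v : vec, enorm (A *m v) <= c * enorm v.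

Definition model_decrease (g : vec) (H : mat) (s : vec) : R :=
  - (dot g s + 1/2 * dot s (H *m s)).

Inductive cgflag := BNDNEG | BNDNORM | INTRES | INTMAX.

(* the CG iterates (y_j, r_j, p_j), computed as if the loop never stopped *)
Fixpoint cg_state (g : vec) (H : mat) (eps : R) (j : nat) : vec * vec * vec :=
  match j with
  | 0 => (0, g, - g)
  | j'.+1 =>
    let: (y, r, p) := cg_state g H eps j' in
    let A := H + (2 * eps)%:M in
    let alpha := enorm r ^+ 2 / dot p (A *m p) in
    let y' := y + alpha *: p in
    let r' := r + alpha *: (A *m p) in
    let beta := enorm r' ^+ 2 / enorm r ^+ 2 in
    (y', r', - r' + beta *: p)
  end.

Definition cg_y g H eps j := (cg_state g H eps j).1.1.
Definition cg_r g H eps j := (cg_state g H eps j).1.2.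
Definition cg_p g H eps j := (cg_state g H eps j).2.

Definition cg_kmax (eps zeta : R) (capCG : bool) (M : R) : R :=
  if capCG then
    let kappa := (M + 2 * eps) / eps in
    Num.min n%:R (1/2 * Num.sqrt kappa *
                  ln (4 * (kappa * Num.sqrt kappa) / zeta))
  else n%:R.

Definition cg_negc g H eps j : Prop :=
  let p := cg_p g H eps j in
  dot p ((H + (2 * eps)%:M) *m p) <= eps * enorm p ^+ 2.
Definition cg_normc g H eps delta j : Prop :=
  delta <= enorm (cg_y g H eps j.+1).
Definition cg_resc g H eps zeta j : Prop :=
  enorm (cg_r g H eps j.+1) <=
    zeta / 2 * Num.min (enorm g) (eps * enorm (cg_y g H eps j.+1)).

Definition cg_boundary g H eps delta j (s : vec) : Prop :=
  exists sigma : R, 0 <= sigma /\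
    s = cg_y g H eps j + sigma *: cg_p g H eps j /\ enorm s = delta.

Definition CG_out (g : vec) (H : mat) (eps delta zeta : R) (capCG : bool) (M : R)
    (s : vec) (flag : cgflag) : Prop :=
  let kmax := cg_kmax eps zeta capCG M in
  exists j : nat,
    (forall i, (i < j)%N -> i%:R < kmax /\ ~ cg_negc g H eps i /\
        ~ cg_normc g H eps delta i /\ ~ cg_resc g H eps zeta i) /\
    ( (j%:R < kmax /\ cg_negc g H eps j /\
         flag = BNDNEG /\ cg_boundary g H eps delta j s)
   \/ (j%:R < kmax /\ ~ cg_negc g H eps j /\ cg_normc g H eps delta j /\
         flag = BNDNORM /\ cg_boundary g H eps delta j s)
   \/ (j%:R < kmax /\ ~ cg_negc g H eps j /\ ~ cg_normc g H eps delta j /\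
         cg_resc g H eps zeta j /\ flag = INTRES /\ s = cg_y g H eps j.+1)
   \/ (kmax <= j%:R /\ flag = INTMAX /\ s = cg_y g H eps j)).

(* Some s: a returned step;  None: the (possibly randomized) oracle returns an
   indication that H >= -eps I.  *)
Definition MEO_out (g : vec) (H : mat) (eps delta xi M : R) (o : option vec) : Prop :=
  match o with
  | Some s => exists v : vec, enorm v = 1 /\ dot v (H *m v) <= - (eps / 2) /\
              (s = delta *: v \/ s = - (delta *: v)) /\
              dot g s <= 0 /\ dot s (H *m s) <= - (1/2 * eps * enorm s ^+ 2) /\
              enorm s = delta
  | None => True
  end.

Record params := Params {
  eps_g : R; eps_H : R; gamma1 : R; gamma2 : R; psi : R;
  delta0 : R; delta_max : R; eta_acc : R; zeta : R; xi : R;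
  capCG : bool; Mc : R }.

Definition valid_params (P : params) (Lg : R) : Prop :=
  0 < eps_g P /\ 0 < eps_H P /\ 0 < gamma1 P < 1 /\ 1 <= gamma2 P /\
  1 / gamma2 P < psi P <= 1 /\ 0 < delta0 P /\ delta0 P <= delta_max P /\
  0 < eta_acc P < 1 /\ 0 < zeta P < 1 /\ 0 <= xi P < 1 /\ Lg <= Mc P.

Definition use_cg (P : params) (g : vec) (flag : cgflag) : Prop :=
  flag = BNDNEG \/ flag = BNDNORM \/ (eps_g P < enorm g /\ flag = INTRES).

Definition cg_phase (P : params) (g : vec) (H : mat) (delta : R)
    (sCG : vec) (flag : cgflag) : Prop :=
  (g != 0 -> CG_out g H (eps_H P) delta (zeta P) (capCG P) (Mc P) sCG flag) /\
  (g = 0 -> sCG = 0 /\ flag = INTRES).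

Definition rho (f : vec -> R) (g : vec -> vec) (H : vec -> mat) (x s : vec) : R :=
  (f x - f (x + s)) / model_decrease (g x) (H x) s.

Definition iter_completes (P : params) f g H (xk : vec) (dk : R) (sk : vec)
    (xk1 : vec) (dk1 : R) : Prop :=
  (exists sCG flag, cg_phase P (g xk) (H xk) dk sCG flag /\
     ((use_cg P (g xk) flag /\ sk = sCG) \/
      (~ use_cg P (g xk) flag /\ MEO_out (g xk) (H xk) (eps_H P) dk (xi P) (Mc P) (Some sk)))) /\
  (eta_acc P <= rho f g H xk sk ->
     xk1 = xk + sk /\
     dk1 = (if psi P * dk <= enorm sk then Num.min (gamma2 P * dk) (delta_max P) else dk)) /\
  (rho f g H xk sk < eta_acc P -> xk1 = xk /\ dk1 = gamma1 P * enorm sk).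

Definition iter_terminates (P : params) (g : vec -> vec) (H : vec -> mat) (xk : vec) (dk : R) : Prop :=
  exists sCG flag, cg_phase P (g xk) (H xk) dk sCG flag /\ ~ use_cg P (g xk) flag /\
     MEO_out (g xk) (H xk) (eps_H P) dk (xi P) (Mc P) None.

(* k is in the index set K (iteration k completed without termination);
   stop = Some N means termination happens at iteration N, None means no termination *)
Definition completed (stop : option nat) (k : nat) : Prop :=
  match stop with None => True | Some N => (k < N)%N end.
Definition reached (stop : option nat) (k : nat) : Prop :=
  match stop with None => True | Some N => (k <= N)%N end.

Definition alg4_run (P : params) f g H (x0 : vec)
    (x : nat -> vec) (d : nat -> R) (s : nat -> vec) (stop : option nat) : Prop :=
  x 0%N = x0 /\ d 0%N = delta0 P /\
  (forall k, completed stop k -> iter_completes P f g H (x k) (d k) (s k) (x k.+1) (d k.+1)) /\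
  (forall N, stop = Some N -> iter_terminates P g H (x N) (d N)).

Definition standing_assumption (f : vec -> R) (g : vec -> vec) (H : vec -> mat) (x : nat -> vec) (s : nat -> vec)
    (stop : option nat) (Lg LH : R) : Prop :=
  0 < Lg /\ 0 < LH /\
  (exists flow : R, forall k, reached stop k -> flow <= f (x k)) /\
  exists U : set vec, open U /\
    (forall k, completed stop k -> forall t : R, 0 <= t <= 1 -> U (x k + t *: s k)) /\
    (forall y, U y ->
       differentiable f y /\ (forall v, 'd f y v = dot (g y) v) /\
       differentiable g y /\ (forall v, 'd g y v = H y *m v) /\
       {for y, continuous H}) /\
    (forall y z, U y -> U z -> enorm (g y - g z) <= Lg * enorm (y - z)) /\
    (forall y z, U y -> U z -> opnorm_le (H y - H z) (LH * enorm (y - z))).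

Definition logb (b x : R) : R := ln x / ln b.

End Alg.

(* Every completed iteration takes a step with [0 < |s_k| <= delta_k] and model decrease at
   least [eps_H |s_k|^2 / 4]: for a CG step this follows from the conjugacy of the CG
   directions for the symmetric matrix [H_k + 2 eps_H I] (the Hessian is symmetric, being the
   derivative of a gradient), for an oracle step it is immediate.  The Hessian being
   [L_H]-Lipschitz, Taylor's formula gives [f (x_k + s_k) <= m_k (x_k + s_k) + L_H |s_k|^3 / 6],
   so every step of norm at most [T = 3 (1 - eta) eps_H / (2 L_H)] is successful.  A failure
   therefore needs [T < delta_k], while failures shrink the radius by [gamma_1] and successes
   keep it below [delta_max]; hence a streak of [u] consecutive failures forces
   [T < gamma_1^(u-1) delta_max], i.e. [u] is at most the floor in the bound, and summing over
   the at most [|S| + 1] streaks gives the claim. *)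

From mathcomp Require Import all_boot all_order all_algebra.
From mathcomp Require Import all_classical all_reals all_analysis.
From mathcomp Require Import ring lra zify.
Import Order.TTheory GRing.Theory Num.Theory.
Import numFieldTopology.Exports numFieldNormedType.Exports.
Local Open Scope ring_scope.

Set Implicit Arguments.
Unset Strict Implicit.
Unset Printing Implicit Defensive.

Section Euclid.
Variables (R : realType) (n : nat).
Implicit Types (u v w : 'cV[R]_n) (a : R).

Lemma dotE u v : dot u v = \sum_i u i 0 * v i 0.
Proof. by rewrite /dot mxE; apply: eq_bigr => i _; rewrite mxE. Qed.

Lemma dotC u v : dot u v = dot v u.
Proof. by rewrite !dotE; apply: eq_bigr => i _; rewrite mulrC. Qed.

Lemma dotDl u v w : dot (u + v) w = dot u w + dot v w.
Proof. by rewrite !dotE -big_split; apply: eq_bigr => i _; rewrite mxE mulrDl. Qed.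

Lemma dotDr u v w : dot w (u + v) = dot w u + dot w v.
Proof. by rewrite dotC dotDl !(dotC w). Qed.

Lemma dotZl a u v : dot (a *: u) v = a * dot u v.
Proof. by rewrite !dotE mulr_sumr; apply: eq_bigr => i _; rewrite mxE mulrA. Qed.

Lemma dotZr a u v : dot u (a *: v) = a * dot u v.
Proof. by rewrite dotC dotZl dotC. Qed.

Lemma dotNl u v : dot (- u) v = - dot u v.
Proof. by rewrite -scaleN1r dotZl mulN1r. Qed.

Lemma dotNr u v : dot u (- v) = - dot u v.
Proof. by rewrite -scaleN1r dotZr mulN1r. Qed.

Lemma dotBl u v w : dot (u - v) w = dot u w - dot v w.
Proof. by rewrite dotDl dotNl. Qed.

Lemma dotBr u v w : dot w (u - v) = dot w u - dot w v.
Proof. by rewrite dotDr dotNr. Qed.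

Lemma dot0l v : dot 0 v = 0.
Proof. by rewrite -(scale0r 0) dotZl mul0r. Qed.

Lemma dot0r v : dot v 0 = 0.
Proof. by rewrite dotC dot0l. Qed.

Lemma dot_ge0 u : 0 <= dot u u.
Proof. by rewrite dotE sumr_ge0 // => i _; rewrite -expr2 sqr_ge0. Qed.

Lemma dot_eq0 u : (dot u u == 0) = (u == 0).
Proof.
apply/idP/eqP => [|->]; last by rewrite dot0l.
rewrite dotE psumr_eq0 => [/allP u0|i _]; last by rewrite -expr2 sqr_ge0.
apply/matrixP => i j; rewrite ord1 mxE.
by have := u0 i (mem_index_enum _); rewrite -expr2 sqrf_eq0 => /eqP.
Qed.

Lemma dot_gt0 u : (0 < dot u u) = (u != 0).
Proof. by rewrite lt_def dot_eq0 dot_ge0 andbT. Qed.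

Lemma enorm_sqr u : enorm u ^+ 2 = dot u u.
Proof. by rewrite sqr_sqrtr // dot_ge0. Qed.

Lemma enorm_ge0 u : 0 <= enorm u.
Proof. exact: sqrtr_ge0. Qed.

Lemma enorm_gt0 u : (0 < enorm u) = (u != 0).
Proof. by rewrite sqrtr_gt0 dot_gt0. Qed.

Lemma enorm0 : enorm (0 : 'cV[R]_n) = 0.
Proof. by rewrite /enorm dot0l sqrtr0. Qed.

Lemma enormZ a u : enorm (a *: u) = `|a| * enorm u.
Proof. by rewrite /enorm dotZl dotZr mulrA -expr2 sqrtrM ?sqr_ge0 // sqrtr_sqr. Qed.

Lemma enormN u : enorm (- u) = enorm u.
Proof. by rewrite /enorm dotNl dotNr opprK. Qed.

Lemma dot_le_enorm u v : dot u v <= enorm u * enorm v.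
Proof.
have [->|u0] := eqVneq u 0; first by rewrite dot0l enorm0 mul0r.
have uu : 0 < dot u u by rewrite dot_gt0.
have sq : dot u v ^+ 2 <= dot u u * dot v v.
  have := dot_ge0 (dot u u *: v - dot u v *: u).
  rewrite !(dotBl, dotBr, dotZl, dotZr) (dotC v u) => h.
  have : 0 <= dot u u * (dot u u * dot v v - dot u v ^+ 2) by nra.
  by rewrite pmulr_rge0 // subr_ge0.
have [uv0|uv0] := lerP (dot u v) 0; first by rewrite (le_trans uv0) ?mulr_ge0 ?enorm_ge0.
rewrite -(@ler_pXn2r _ 2) ?nnegrE ?(ltW uv0) ?mulr_ge0 ?enorm_ge0 //.
by rewrite exprMn !enorm_sqr.
Qed.

Lemma normr_dot_le u v : `|dot u v| <= enorm u * enorm v.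
Proof.
by rewrite ler_norml dot_le_enorm andbT lerNl -dotNl -(enormN u); apply: dot_le_enorm.
Qed.

Lemma dot_lineE u w (t : R) :
  dot (u + t *: w) (u + t *: w) = dot u u + 2 * t * dot u w + t ^+ 2 * dot w w.
Proof. by rewrite !(dotDl, dotDr, dotZl, dotZr) (dotC w u); ring. Qed.

(* [t |-> enorm (u + t *: w)] is increasing on [0, +oo) when [dot u w >= 0]. *)
Lemma le_of_enorm_line u w (sigma alpha delta : R) :
  0 <= dot u w -> 0 <= alpha -> enorm u < delta ->
  enorm (u + sigma *: w) = delta -> delta <= enorm (u + alpha *: w) -> sigma <= alpha.
Proof.
move=> uw_ge0 alpha_ge0 u_lt ns_eq na_ge; rewrite leNgt; apply/negP => lt_as.
have d_gt0 : 0 < delta by apply: le_lt_trans u_lt; apply: enorm_ge0.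
have a_ge : delta ^+ 2 <= enorm (u + alpha *: w) ^+ 2.
  by rewrite ler_sqr ?nnegrE ?enorm_ge0 ?(ltW d_gt0).
have u_lt2 : enorm u ^+ 2 < delta ^+ 2 by rewrite ltr_sqr ?nnegrE ?enorm_ge0 ?(ltW d_gt0).
move: a_ge u_lt2; rewrite -ns_eq !enorm_sqr !dot_lineE.
have ww_ge0 := dot_ge0 w; move: (dot u u) (dot u w) (dot w w) uw_ge0 ww_ge0.
move=> uu uw ww uw_ge0 ww_ge0 a_ge u_lt2.
have : (sigma - alpha) * (2 * uw + (sigma + alpha) * ww) <= 0 by nra.
rewrite pmulr_rle0 ?subr_gt0 // => h.
have sigma_gt0 : 0 < sigma by apply: le_lt_trans lt_as.
have : sigma * (2 * uw + (sigma + alpha) * ww) <= 0 by rewrite pmulr_rle0.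
have : 0 <= sigma * alpha * ww by rewrite !mulr_ge0 // ltW.
lra.
Qed.

End Euclid.

Section Taylor.
Variable R : realType.
Implicit Types (phi psi : R -> R) (c t : R).

Lemma le_at0_of_derive_le0 psi (dpsi : R -> R) :
  (forall t, 0 <= t <= 1 -> is_derive t (1 : R) psi (dpsi t)) ->
  (forall t, 0 <= t <= 1 -> dpsi t <= 0) ->
  forall t, 0 <= t <= 1 -> psi t <= psi 0.
Proof.
move=> D N t /andP[t0 t1].
have [c c0t E] : exists2 c, c \in `[0, t]%R & psi t - psi 0 = dpsi c * (t - 0).
  apply: MVT_segment => // [u|]; first by rewrite in_itv /= => /andP[u0 ut];
    apply: D; rewrite ltW //= (le_trans (ltW ut)).
  apply: derivable_within_continuous => u; rewrite in_itv /= => /andP[u0 ut].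
  by have [] := D u; rewrite ?u0 ?(le_trans ut t1).
move: c0t; rewrite in_itv /= => /andP[c0 ct].
by rewrite -subr_le0 E subr0 mulr_le0_ge0 // N // c0 (le_trans ct).
Qed.

Lemma taylor1_le phi (phi1 : R -> R) c :
  (forall t, 0 <= t <= 1 -> is_derive t (1 : R) phi (phi1 t)) ->
  (forall t, 0 <= t <= 1 -> phi1 t - phi1 0 <= c * t) ->
  forall t, 0 <= t <= 1 -> phi t - phi 0 - t * phi1 0 <= c / 2 * t ^+ 2.
Proof.
move=> D B.
pose psi := phi - cst (phi 0) - id * cst (phi1 0) - cst (c / 2) * id ^+ 2.
have Dpsi t : 0 <= t <= 1 -> is_derive t (1 : R) psi (phi1 t - phi1 0 - c * t).
  move=> /D Dt; apply: is_derive_eq.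
  rewrite !scaler0 ?addr0 ?add0r ?subr0 expr1 ![_%:A]mulr1.
  by congr (_ - _); rewrite -[(c / 2) *: _]/((c / 2) * _); field.
have psiE u : psi u = phi u - phi 0 - u * phi1 0 - c / 2 * u ^+ 2 by [].
have dpsi_le0 u : 0 <= u <= 1 -> phi1 u - phi1 0 - c * u <= 0.
  by move=> /B; rewrite subr_le0.
move=> t t01; have := le_at0_of_derive_le0 Dpsi dpsi_le0 t01.
rewrite !psiE expr0n /=; lra.
Qed.

Lemma taylor2_le phi (phi1 phi2 : R -> R) c :
  (forall t, 0 <= t <= 1 -> is_derive t (1 : R) phi (phi1 t)) ->
  (forall t, 0 <= t <= 1 -> is_derive t (1 : R) phi1 (phi2 t)) ->
  (forall t, 0 <= t <= 1 -> phi2 t - phi2 0 <= c * t) ->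
  phi 1 - phi 0 - phi1 0 - phi2 0 / 2 <= c / 6.
Proof.
move=> D D1 B.
pose psi := phi - cst (phi 0) - id * cst (phi1 0) - cst (phi2 0 / 2) * id ^+ 2
   - cst (c / 6) * id ^+ 3.
have Dpsi t : 0 <= t <= 1 ->
    is_derive t (1 : R) psi (phi1 t - phi1 0 - t * phi2 0 - c / 2 * t ^+ 2).
  move=> /D Dt; apply: is_derive_eq.
  rewrite !scaler0 ?addr0 ?add0r ?subr0 expr1 ![_%:A]mulr1.
  rewrite -[(c / 6) *: _]/((c / 6) * _) -[(phi2 0 / 2) *: _]/((phi2 0 / 2) * _) /=.
  by field.
have psiE u : psi u = phi u - phi 0 - u * phi1 0 - phi2 0 / 2 * u ^+ 2 - c / 6 * u ^+ 3.
  by [].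
have dpsi_le0 u : 0 <= u <= 1 -> phi1 u - phi1 0 - u * phi2 0 - c / 2 * u ^+ 2 <= 0.
  by move=> /(taylor1_le D1 B); rewrite subr_le0.
have := le_at0_of_derive_le0 Dpsi dpsi_le0 (_ : 0 <= 1 <= 1).
rewrite !psiE expr0n /= !expr1n lexx ler01 => /(_ isT); lra.
Qed.

Lemma taylor1_abs phi (phi1 : R -> R) c :
  (forall t, 0 <= t <= 1 -> is_derive t (1 : R) phi (phi1 t)) ->
  (forall t, 0 <= t <= 1 -> `|phi1 t - phi1 0| <= c * t) ->
  `|phi 1 - phi 0 - phi1 0| <= c / 2.
Proof.
move=> D B; have t01 : 0 <= (1 : R) <= 1 by rewrite ler01 lexx.
have ND t : 0 <= t <= 1 -> is_derive t (1 : R) (fun u => - phi u) (- phi1 t).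
  by move=> /D; rewrite -/(- phi); apply: is_deriveN.
have NB t : 0 <= t <= 1 -> - phi1 t - - phi1 0 <= c * t.
  by move=> /B; rewrite ler_norml => /andP[lo _]; lra.
have UB t : 0 <= t <= 1 -> phi1 t - phi1 0 <= c * t.
  by move=> /B; rewrite ler_norml => /andP[].
have := taylor1_le ND NB t01; have := taylor1_le D UB t01.
rewrite ler_norml /= expr1n !mul1r; lra.
Qed.

Lemma taylor2_abs phi (phi1 phi2 : R -> R) c :
  (forall t, 0 <= t <= 1 -> is_derive t (1 : R) phi (phi1 t)) ->
  (forall t, 0 <= t <= 1 -> is_derive t (1 : R) phi1 (phi2 t)) ->
  (forall t, 0 <= t <= 1 -> `|phi2 t - phi2 0| <= c * t) ->
  `|phi 1 - phi 0 - phi1 0 - phi2 0 / 2| <= c / 6.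
Proof.
move=> D D1 B.
have ND t : 0 <= t <= 1 -> is_derive t (1 : R) (fun u => - phi u) (- phi1 t).
  by move=> /D; rewrite -/(- phi); apply: is_deriveN.
have ND1 t : 0 <= t <= 1 -> is_derive t (1 : R) (fun u => - phi1 u) (- phi2 t).
  by move=> /D1; rewrite -/(- phi1); apply: is_deriveN.
have NB t : 0 <= t <= 1 -> - phi2 t - - phi2 0 <= c * t.
  by move=> /B; rewrite ler_norml => /andP[lo _]; lra.
have UB t : 0 <= t <= 1 -> phi2 t - phi2 0 <= c * t.
  by move=> /B; rewrite ler_norml => /andP[].
have := taylor2_le ND ND1 NB; have := taylor2_le D D1 UB.
rewrite ler_norml /=; lra.
Qed.

End Taylor.

Lemma eq0_of_norm_le_small (R : realFieldType) (d K t0 : R) : 0 < t0 ->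
  (forall t, 0 < t <= t0 -> `|d| <= t * K) -> d = 0.
Proof.
move=> t0_gt0 B; apply/normr0_eq0/eqP; rewrite eq_le normr_ge0 andbT.
apply/ler_addgt0Pr => e e_gt0; rewrite add0r.
have K1_gt0 : 0 < `|K| + 1 by rewrite ltr_wpDl.
pose t := Num.min t0 (e / (`|K| + 1)).
have t_gt0 : 0 < t by rewrite lt_min t0_gt0 divr_gt0.
have : t <= e / (`|K| + 1) by rewrite ge_min lexx orbT.
rewrite ler_pdivlMr // => te.
have tK : t * K <= t * `|K| by rewrite ler_wpM2l ?ler_norm // ltW.
by rewrite (le_trans (B t _)) ?t_gt0 ?ge_min ?lexx //; nra.
Qed.

Lemma open_box (R : realType) (V : normedModType R) (U : set V) (x u v : V) :
  open U -> U x -> exists2 t0 : R, 0 < t0 & forall t al be : R,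
    0 <= t <= t0 -> 0 <= al <= 1 -> 0 <= be <= 1 ->
    U (x + al *: (t *: u) + be *: (t *: v)).
Proof.
move=> oU Ux; have /nbhs_ballP[r r_gt0 ballU] : nbhs x U by apply: open_nbhs_nbhs.
have uv_ge0 : 0 <= `|u| + `|v| by rewrite addr_ge0.
exists (r / (`|u| + `|v| + 1)); first by rewrite divr_gt0 // ltr_wpDl.
move=> t al be /andP[t0 tt0] /andP[al0 al1] /andP[be0 be1]; apply: ballU.
rewrite -ball_normE /= -addrA opprD addrA subrr add0r normrN.
apply: le_lt_trans (ler_normD _ _) _; rewrite !normrZ !ger0_norm //.
have : al * (t * `|u|) + be * (t * `|v|) <= t * (`|u| + `|v|).
  by rewrite mulrDr lerD // ler_piMl ?mulr_ge0.
move/le_lt_trans; apply; apply: le_lt_trans (_ : _ <= r / (`|u| + `|v| + 1) * (`|u| + `|v|)) _.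
  by rewrite ler_wpM2r.
by rewrite mulrAC ltr_pdivrMr ?ltr_wpDl // ltr_pM2l // ltrDl.
Qed.

Section Lines.
Local Open Scope classical_set_scope.
Variables (R : realType) (n : nat).
Implicit Types (y w : 'cV[R]_n).

Lemma line_diff_quot (W : normedModType R) (F : 'cV[R]_n -> W) y w (t : R) :
  (fun h : R => h^-1 *: (((fun s : R => F (y + s *: w)) \o shift t) (h *: 1)
                          - F (y + t *: w)))
  = (fun h : R => h^-1 *: ((F \o shift (y + t *: w)) (h *: w) - F (y + t *: w))).
Proof.
apply: funext => h /=; rewrite /shift /=; congr (_ *: (F _ - _)).
by rewrite [h%:A]mulr1 scalerDl addrCA.
Qed.

Lemma derivable_line (W : normedModType R) (F : 'cV[R]_n -> W) y w (t : R) :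
  derivable F (y + t *: w) w -> derivable (fun s : R => F (y + s *: w)) t 1.
Proof. by rewrite /derivable line_diff_quot. Qed.

Lemma derive_line (W : normedModType R) (F : 'cV[R]_n -> W) y w (t : R) :
  'D_1 (fun s : R => F (y + s *: w)) t = 'D_w F (y + t *: w).
Proof. by rewrite /derive line_diff_quot. Qed.

Lemma continuous_dotl (v : 'cV[R]_n) : continuous (fun u : 'cV[R]_n => dot u v).
Proof.
move=> u; apply: differentiable_continuous.
have -> : (fun u : 'cV[R]_n => dot u v) =
    \sum_(i < n) (fun u : 'cV[R]_n => u i 0 * v i 0).
  by rewrite fct_sumE; apply: funext => z; rewrite dotE.
apply: differentiable_sum => i.
have -> : (fun u : 'cV[R]_n => u i 0 * v i 0) = (fun u => u i 0) * cst (v i 0) by [].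
exact: differentiableM (differentiable_coord _ _ _) (differentiable_cst _ _).
Qed.

Lemma is_derive_dotl (V : normedModType R) (G : V -> 'cV[R]_n) (z w : V) v :
  derivable G z w -> is_derive z w (fun z => dot (G z) v) (dot ('D_w G z) v).
Proof.
move=> dG.
have quotE : (fun h : R => h^-1 *: (((fun z => dot (G z) v) \o shift z) (h *: w)
                                     - dot (G z) v))
   = (fun u => dot u v) \o (fun h : R => h^-1 *: ((G \o shift z) (h *: w) - G z)).
  by apply: funext => h /=; rewrite dotZl dotBl.
have lim_quot : (fun h : R => h^-1 *: (((fun z => dot (G z) v) \o shift z) (h *: w)
      - dot (G z) v)) @ 0^' --> dot ('D_w G z) v.
  by rewrite quotE; apply: continuous_cvg; [exact: continuous_dotl | exact: dG].
by apply: DeriveDef; [apply/cvg_ex; eexists; exact: lim_quot | exact: cvg_lim].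
Qed.

End Lines.

Section Smooth.
Variables (R : realType) (n : nat).
Variables (f : 'cV[R]_n -> R) (g : 'cV[R]_n -> 'cV[R]_n) (H : 'cV[R]_n -> 'M[R]_n).
Variables (U : set 'cV[R]_n) (LH : R).
Hypothesis smoothU : forall y, U y ->
  [/\ differentiable f y, forall v, 'd f y v = dot (g y) v,
      differentiable g y & forall v, 'd g y v = H y *m v].
Hypothesis hessian_lip : forall y z, U y -> U z ->
  opnorm_le (H y - H z) (LH * enorm (y - z)).
Implicit Types (x y z u v w : 'cV[R]_n).

Lemma is_derive_f_line y w t : U (y + t *: w) ->
  is_derive t (1 : R) (fun s => f (y + s *: w)) (dot (g (y + t *: w)) w).
Proof.
case/smoothU => df dfE _ _; apply: DeriveDef; first exact/derivable_line/diff_derivable.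
by rewrite derive_line deriveE // dfE.
Qed.

Lemma is_derive_g_line y w v t : U (y + t *: w) ->
  is_derive t (1 : R) (fun s => dot (g (y + s *: w)) v) (dot (H (y + t *: w) *m w) v).
Proof.
case/smoothU => _ _ dg dgE; have dGv := is_derive_dotl v (diff_derivable (v := w) dg).
apply: DeriveDef; first exact: (derivable_line (F := fun z => dot (g z) v)).
by rewrite (derive_line (fun z => dot (g z) v)) derive_val deriveE // dgE.
Qed.

Lemma hessian_lip_dot y z u v : U y -> U z ->
  `|dot ((H z - H y) *m u) v| <= LH * enorm (z - y) * enorm u * enorm v.
Proof.
move=> Uy Uz; apply: le_trans (normr_dot_le _ _) _.
by rewrite ler_wpM2r ?enorm_ge0 ?hessian_lip.
Qed.

Lemma hessian_lip_line y w v t : 0 <= t -> U y -> U (y + t *: w) ->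
  `|dot ((H (y + t *: w) - H y) *m w) v| <= LH * enorm w ^+ 2 * enorm v * t.
Proof.
move=> t0 Uy Uyt; apply: le_trans (hessian_lip_dot w v Uy Uyt) _.
by rewrite addrAC subrr add0r enormZ ger0_norm //; lra.
Qed.

Lemma taylor_f y w : (forall t, 0 <= t <= 1 -> U (y + t *: w)) ->
  `|f (y + w) - f y - dot (g y) w - dot w (H y *m w) / 2| <= LH * enorm w ^+ 3 / 6.
Proof.
move=> seg; have Uy : U y by have := seg 0; rewrite scale0r addr0 lexx ler01; apply.
have := taylor2_abs (c := LH * enorm w ^+ 3) (fun t t01 => is_derive_f_line (seg t t01))
  (fun t t01 => is_derive_g_line w (seg t t01)).
rewrite scale1r !scale0r !addr0 (dotC w) mulrA; apply => t /andP[t0 t1].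
by rewrite -dotBl -mulmxBl (le_trans (hessian_lip_line w t0 Uy (seg t _))) ?t0 //; lra.
Qed.

Lemma taylor_g y w v : (forall t, 0 <= t <= 1 -> U (y + t *: w)) ->
  `|dot (g (y + w)) v - dot (g y) v - dot (H y *m w) v|
    <= LH * enorm w ^+ 2 * enorm v / 2.
Proof.
move=> seg; have Uy : U y by have := seg 0; rewrite scale0r addr0 lexx ler01; apply.
have := taylor1_abs (c := LH * enorm w ^+ 2 * enorm v)
  (fun t t01 => is_derive_g_line v (seg t t01)).
rewrite scale1r !scale0r !addr0; apply => t /andP[t0 t1].
by rewrite -dotBl -mulmxBl (hessian_lip_line v t0 Uy (seg t _)) ?t0.
Qed.

Lemma second_difference x u v :
  (forall al be : R, 0 <= al <= 1 -> 0 <= be <= 1 -> U (x + al *: u + be *: v)) ->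
  `|f (x + u + v) - f (x + u) - f (x + v) + f x - dot (H x *m u) v|
    <= LH * (enorm v ^+ 3 / 3 + enorm u ^+ 2 * enorm v / 2 + enorm u * enorm v ^+ 2 / 2).
Proof.
move=> box.
have segv t : 0 <= t <= 1 -> U (x + u + t *: v).
  by move=> t01; have := box 1 t; rewrite scale1r ler01 lexx; apply.
have segv0 t : 0 <= t <= 1 -> U (x + t *: v).
  by move=> t01; have := box 0 t; rewrite scale0r addr0 ler01 lexx; apply.
have segu t : 0 <= t <= 1 -> U (x + t *: u).
  by move=> t01; have := box t 0; rewrite scale0r addr0 ler01 lexx; apply.
have Ux : U x by have := segv0 0; rewrite scale0r addr0 lexx ler01; apply.
have Uxu : U (x + u) by have := segu 1; rewrite scale1r lexx ler01; apply.
have := taylor_f segv; have := taylor_f segv0; have := taylor_g v segu.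
have := hessian_lip_dot v v Ux Uxu; rewrite addrAC subrr add0r.
rewrite mulmxBl dotBl (dotC v (H (x + u) *m v)) (dotC v (H x *m v)).
move: (enorm u) (enorm v) => nu nv; rewrite !ler_norml.
move=> /andP[? ?] /andP[? ?] /andP[? ?] /andP[? ?]; apply/andP; split; lra.
Qed.

(* Both [dot (H x *m u) v] and [dot (H x *m v) u] approximate the second difference of
   [f] at [x] along [t u] and [t v], which is symmetric in [u] and [v], up to [O(t^3)]. *)
Lemma hessian_sym x : open U -> U x -> forall u v, dot (H x *m u) v = dot (H x *m v) u.
Proof.
move=> oU Ux u v; have [t0 t0_gt0 box] := open_box u v oU Ux.
pose K := LH * (enorm v ^+ 3 / 3 + enorm u ^+ 2 * enorm v / 2 + enorm u * enorm v ^+ 2 / 2)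
        + LH * (enorm u ^+ 3 / 3 + enorm v ^+ 2 * enorm u / 2 + enorm v * enorm u ^+ 2 / 2).
apply/eqP; rewrite -subr_eq0; apply/eqP; apply: (eq0_of_norm_le_small (K := K) t0_gt0).
move=> t /andP[t_gt0 tt0]; have t01 : 0 <= t <= t0 by rewrite ltW.
have boxuv al be : 0 <= al <= 1 -> 0 <= be <= 1 -> U (x + al *: (t *: u) + be *: (t *: v)).
  exact: box.
have boxvu al be : 0 <= al <= 1 -> 0 <= be <= 1 -> U (x + al *: (t *: v) + be *: (t *: u)).
  by move=> al01 be01; rewrite addrAC; apply: box.
have := second_difference boxuv; have := second_difference boxvu.
rewrite (addrAC x (t *: v)) -!scalemxAr !dotZl !dotZr !enormZ !(ger0_norm (ltW t_gt0)).
rewrite !ler_norml => /andP[? ?] /andP[? ?]; rewrite /K.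
by apply/andP; split; rewrite -(ler_pM2l (exprn_gt0 2 t_gt0)); lra.
Qed.

End Smooth.

Section ConjugateGradient.
Variables (R : realType) (n : nat) (g : 'cV[R]_n) (H : 'M[R]_n) (eps : R).
Hypothesis H_sym : forall u v, dot (H *m u) v = dot (H *m v) u.

Local Notation A := (H + (2 * eps)%:M).
Local Notation y := (cg_y g H eps).
Local Notation r := (cg_r g H eps).
Local Notation p := (cg_p g H eps).
Local Notation a j := (dot (p j) (A *m p j)).
Local Notation nr j := (dot (r j) (r j)).
Local Notation alpha j := (enorm (r j) ^+ 2 / a j).
Local Notation beta j := (enorm (r j.+1) ^+ 2 / enorm (r j) ^+ 2).

Lemma cg_mat_sym u v : dot (A *m u) v = dot (A *m v) u.
Proof. by rewrite !mulmxDl !mul_scalar_mx !dotDl !dotZl H_sym (dotC u v). Qed.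

Lemma cg_y0 : y 0 = 0. Proof. by []. Qed.
Lemma cg_r0 : r 0 = g. Proof. by []. Qed.
Lemma cg_p0 : p 0 = - g. Proof. by []. Qed.

Lemma cg_yS j : y j.+1 = y j + alpha j *: p j.
Proof. by rewrite /cg_y /cg_r /cg_p /=; case: (cg_state g H eps j) => [[? ?] ?]. Qed.

Lemma cg_rS j : r j.+1 = r j + alpha j *: (A *m p j).
Proof. by rewrite /cg_y /cg_r /cg_p /=; case: (cg_state g H eps j) => [[? ?] ?]. Qed.

Lemma cg_pS j : p j.+1 = - r j.+1 + beta j *: p j.
Proof. by rewrite /cg_y /cg_r /cg_p /=; case: (cg_state g H eps j) => [[? ?] ?]. Qed.

Lemma cg_residual j : r j = g + A *m y j.
Proof.
elim: j => [|j IH]; first by rewrite cg_r0 cg_y0 mulmx0 addr0.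
by rewrite cg_rS cg_yS IH mulmxDr scalemxAr addrA.
Qed.

(* No division by zero (which would silently yield 0) in the first [J] CG steps. *)
Definition cg_nondeg (J : nat) : Prop :=
  forall i, (i < J)%N -> 0 < a i /\ 0 < nr i.

Lemma cg_alpha_gt0 J i : cg_nondeg J -> (i < J)%N -> 0 < alpha i.
Proof. by move=> ndJ /ndJ[ai nri]; rewrite enorm_sqr divr_gt0. Qed.

Lemma cg_rp_of_orth k : (forall i, (i < k)%N -> dot (r k) (p i) = 0) ->
  dot (r k) (p k) = - nr k.
Proof.
case: k => [_|k rp0]; first by rewrite cg_r0 cg_p0 dotNr.
by rewrite cg_pS dotDr dotNr dotZr rp0 // mulr0 addr0.
Qed.

Lemma cg_conjugacy J : cg_nondeg J -> forall k, (k <= J)%N -> forall i, (i < k)%N ->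
  [/\ dot (r k) (p i) = 0, dot (p k) (A *m p i) = 0 & dot (r k) (r i) = 0].
Proof.
move=> ndJ; elim=> [//|k IH] kJ; have {IH} IHk := IH (ltnW kJ).
have [ak_gt0 nrk_gt0] := ndJ k kJ.
have Apv i v : (i < J)%N -> dot (A *m p i) v = (dot (r i.+1) v - dot (r i) v) / alpha i.
  move=> iJ; have := cg_alpha_gt0 ndJ iJ; rewrite cg_rS dotDl dotZl.
  by set al := enorm (r i) ^+ 2 / _; move=> al_gt0; field; rewrite gt_eqF.
have rpk : dot (r k) (p k) = - nr k by apply: cg_rp_of_orth => i /IHk[].
have rp : forall i, (i < k.+1)%N -> dot (r k.+1) (p i) = 0.
  move=> i; rewrite ltnS leq_eqVlt => /orP[/eqP->|ik].
    rewrite cg_rS dotDl dotZl (dotC (A *m p k)) rpk.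
    by rewrite enorm_sqr mulfVK ?gt_eqF // addNr.
  by rewrite cg_rS dotDl dotZl cg_mat_sym (dotC (A *m p i)); case: (IHk i ik) => -> -> _;
    rewrite mulr0 addr0.
have rr : forall i, (i < k.+1)%N -> dot (r k.+1) (r i) = 0.
  case=> [_|i ik].
    have -> : r 0 = - p 0 by rewrite cg_p0 opprK.
    by rewrite dotNr rp // oppr0.
  have -> : r i.+1 = beta i *: p i - p i.+1 by rewrite cg_pS opprD opprK addrCA subrr addr0.
  by rewrite dotBr dotZr !rp ?(ltnW ik) // mulr0 subr0.
move=> i ik; split; [exact: rp | | exact: rr].
have iJ : (i < J)%N := leq_ltn_trans (ltnSE ik) kJ.
rewrite cg_pS dotDl dotNl dotZl (dotC (r k.+1)) Apv //.
move: ik; rewrite ltnS leq_eqVlt => /orP[/eqP->|ik].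
  rewrite (dotC (r k)) (rr k) // subr0 !enorm_sqr.
  by field; rewrite !gt_eqF.
rewrite (dotC (r i.+1)) (dotC (r i)) !rr ?(ltnW ik) ?(ltn_trans ik) //.
by rewrite subrr mul0r oppr0 add0r; case: (IHk i ik) => _ -> _; rewrite mulr0.
Qed.

Lemma cg_rp J k : cg_nondeg J -> (k <= J)%N -> dot (r k) (p k) = - nr k.
Proof.
move=> ndJ kJ; apply: cg_rp_of_orth => i ik.
by case: (cg_conjugacy ndJ kJ ik).
Qed.

Lemma cg_pp_ge0 J k m : cg_nondeg J -> (k <= m <= J)%N -> 0 <= dot (p k) (p m).
Proof.
move=> ndJ; elim: m => [|m IH] /andP[km mJ].
  by move: km; rewrite leqn0 => /eqP->; apply: dot_ge0.
move: km; rewrite leq_eqVlt => /orP[/eqP->|km]; first exact: dot_ge0.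
rewrite cg_pS dotDr dotNr dotZr (dotC (p k)); case: (cg_conjugacy ndJ mJ km) => -> _ _.
by rewrite oppr0 add0r mulr_ge0 ?divr_ge0 ?exprn_ge0 ?enorm_ge0 // IH // -ltnS km (ltnW mJ).
Qed.

Lemma cg_yp_ge0 J k m : cg_nondeg J -> (k <= m <= J)%N -> 0 <= dot (y k) (p m).
Proof.
move=> ndJ; elim: k => [|k IH] /andP[km mJ]; first by rewrite cg_y0 dot0l.
have kJ : (k < J)%N := leq_trans km mJ.
rewrite cg_yS dotDl dotZl addr_ge0 ?IH ?(ltnW km) ?mJ //.
by rewrite mulr_ge0 ?(cg_pp_ge0 ndJ) ?(ltnW km) ?mJ // ltW // (cg_alpha_gt0 ndJ).
Qed.

(* The quadratic minimized by CG: the model [m_k] with Hessian regularized to [A],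
   up to its constant term. *)
Definition cg_obj (z : 'cV[R]_n) : R := dot g z + dot z (A *m z) / 2.

Lemma cg_obj_line z w t :
  cg_obj (z + t *: w) = cg_obj z + t * dot (g + A *m z) w + t ^+ 2 / 2 * dot w (A *m w).
Proof.
rewrite /cg_obj mulmxDr -scalemxAr !(dotDl, dotDr, dotZl, dotZr).
by rewrite (dotC w (A *m z)) (dotC z (A *m w)) cg_mat_sym; field.
Qed.

Lemma cg_obj_along J k (sigma : R) : cg_nondeg J -> (k <= J)%N ->
  cg_obj (y k + sigma *: p k) = cg_obj (y k) - sigma * nr k + sigma ^+ 2 / 2 * a k.
Proof. by move=> ndJ kJ; rewrite cg_obj_line -cg_residual (cg_rp ndJ kJ) mulrN. Qed.

Lemma cg_obj_decr J k : cg_nondeg J -> (k < J)%N -> cg_obj (y k.+1) <= cg_obj (y k).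
Proof.
move=> ndJ kJ; have [ak_gt0 nrk_gt0] := ndJ k kJ.
rewrite cg_yS (cg_obj_along _ ndJ (ltnW kJ)) enorm_sqr -addrA gerDl.
have -> : - (nr k / a k * nr k) + (nr k / a k) ^+ 2 / 2 * a k = - (nr k ^+ 2 / a k / 2).
  by field; rewrite gt_eqF.
by rewrite oppr_le0 !divr_ge0 ?sqr_ge0 ?ltW.
Qed.

Lemma cg_obj_le0 J k : cg_nondeg J -> (k <= J)%N -> cg_obj (y k) <= 0.
Proof.
move=> ndJ; elim: k => [|k IH] kJ.
  by rewrite cg_y0 /cg_obj dot0r mulmx0 dot0r mul0r addr0.
exact: le_trans (cg_obj_decr ndJ kJ) (IH (ltnW kJ)).
Qed.

End ConjugateGradient.

Section CGExits.
Variables (R : realType) (n : nat) (g : 'cV[R]_n) (H : 'M[R]_n).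
Variables (eps delta zeta : R) (capCG : bool) (M : R).
Hypothesis g_neq0 : g != 0.
Hypothesis H_sym : forall u v, dot (H *m u) v = dot (H *m v) u.
Hypothesis eps_gt0 : 0 < eps.
Hypothesis delta_gt0 : 0 < delta.
Hypothesis zeta_ge0 : 0 <= zeta.

Local Notation A := (H + (2 * eps)%:M).
Local Notation y := (cg_y g H eps).
Local Notation r := (cg_r g H eps).
Local Notation p := (cg_p g H eps).
Local Notation a j := (dot (p j) (A *m p j)).
Local Notation nr j := (dot (r j) (r j)).
Local Notation Q := (cg_obj g H eps).

Lemma model_decrease_cg_obj s : model_decrease g H s = - Q s + eps * dot s s.
Proof. by rewrite /model_decrease /cg_obj mulmxDl mul_scalar_mx dotDr dotZr; field. Qed.

Lemma cg_curv_gt0 j : ~ cg_negc g H eps j -> 0 < a j.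
Proof.
move=> /negP; rewrite -ltNge; apply: le_lt_trans.
by rewrite mulr_ge0 ?sqr_ge0 ?ltW.
Qed.

Lemma cg_nondeg_of_continue j :
    (forall i, (i < j)%N -> ~ cg_negc g H eps i /\ ~ cg_resc g H eps zeta i) ->
  cg_nondeg g H eps j /\ 0 < nr j.
Proof.
move=> cont.
have nr_gt0 i : (i <= j)%N -> 0 < nr i.
  case: i => [_|i /cont[_ /negP]]; first by rewrite dot_gt0.
  rewrite -ltNge -enorm_sqr => /(le_lt_trans _) lt; rewrite exprn_gt0 // lt //.
  by rewrite mulr_ge0 ?divr_ge0 // le_min enorm_ge0 mulr_ge0 ?enorm_ge0 ?ltW.
split; last exact: nr_gt0.
by move=> i ij; split; [apply: cg_curv_gt0; case: (cont i ij) | apply/nr_gt0/ltnW].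
Qed.

Lemma cg_obj_bndneg j sigma : cg_nondeg g H eps j -> 0 < nr j -> cg_negc g H eps j ->
    0 <= sigma ->
  Q (y j + sigma *: p j) <= eps / 2 * dot (y j + sigma *: p j) (y j + sigma *: p j).
Proof.
move=> ndj nrj_gt0; rewrite /cg_negc enorm_sqr => neg sigma_ge0.
rewrite (cg_obj_along H_sym _ ndj (leqnn j)) dot_lineE.
have Qy := cg_obj_le0 H_sym ndj (leqnn j).
have yp : 0 <= dot (y j) (p j) by apply: (cg_yp_ge0 H_sym ndj); rewrite leqnn.
have : sigma ^+ 2 / 2 * a j <= sigma ^+ 2 / 2 * (eps * dot (p j) (p j)).
  by rewrite ler_wpM2l ?divr_ge0 ?sqr_ge0.
have := mulr_ge0 (ltW eps_gt0) (dot_ge0 (y j)).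
have := mulr_ge0 (mulr_ge0 (ltW eps_gt0) sigma_ge0) yp.
have := mulr_ge0 sigma_ge0 (ltW nrj_gt0).
lra.
Qed.

(* The boundary point comes before the full CG step [alpha_j], along which [Q] decreases. *)
Lemma cg_obj_bndnorm j sigma : cg_nondeg g H eps j -> 0 < nr j ->
  ~ cg_negc g H eps j -> enorm (y j) < delta -> cg_normc g H eps delta j ->
  0 <= sigma -> enorm (y j + sigma *: p j) = delta -> Q (y j + sigma *: p j) <= 0.
Proof.
move=> ndj nrj_gt0 /cg_curv_gt0 aj_gt0 yj_lt; rewrite /cg_normc cg_yS => nrm.
move=> sigma_ge0 ns.
have yp : 0 <= dot (y j) (p j) by apply: (cg_yp_ge0 H_sym ndj); rewrite leqnn.
have alpha_ge0 : 0 <= enorm (r j) ^+ 2 / a j by rewrite divr_ge0 ?sqr_ge0 ?enorm_ge0 ?ltW.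
have := le_of_enorm_line yp alpha_ge0 yj_lt ns nrm.
rewrite enorm_sqr ler_pdivlMr // => sa.
rewrite (cg_obj_along H_sym _ ndj (leqnn j)).
have : sigma * (sigma * a j) <= sigma * nr j by rewrite ler_wpM2l.
have := cg_obj_le0 H_sym ndj (leqnn j).
have := mulr_ge0 sigma_ge0 (ltW nrj_gt0).
lra.
Qed.

Lemma cg_intres j : cg_nondeg g H eps j -> 0 < nr j ->
  ~ cg_negc g H eps j -> cg_resc g H eps zeta j -> y j.+1 != 0 /\ Q (y j.+1) <= 0.
Proof.
move=> ndj nrj_gt0 /cg_curv_gt0 aj_gt0 res; split.
  apply/eqP => y0; move: res; rewrite /cg_resc y0 enorm0 mulr0.
  rewrite cg_residual y0 mulmx0 addr0 => /le_trans/(_ _) g_le0.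
  have : enorm g <= 0 by apply: g_le0; rewrite mulr_ge0_le0 ?divr_ge0 // ge_min lexx orbT.
  by rewrite leNgt enorm_gt0 g_neq0.
apply: (cg_obj_le0 H_sym (J := j.+1)) => // i; rewrite ltnS leq_eqVlt.
by case/orP => [/eqP-> | /ndj].
Qed.

Lemma cg_step_decrease s flag :
  CG_out g H eps delta zeta capCG M s flag -> flag <> INTMAX ->
  0 < enorm s <= delta /\ eps / 2 * enorm s ^+ 2 <= model_decrease g H s.
Proof.
move=> [j [pre exits]] not_max.
have [ndj nrj_gt0] : cg_nondeg g H eps j /\ 0 < nr j.
  by apply: cg_nondeg_of_continue => i /pre[_ [? [_ ?]]].
have yj_lt : enorm (y j) < delta.
  case: j pre {exits ndj nrj_gt0} => [|j] pre; first by rewrite cg_y0 enorm0.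
  by have [_ [_ [/negP]]] := pre j (ltnSn j); rewrite /cg_normc -ltNge.
rewrite model_decrease_cg_obj enorm_sqr.
suff [ns HQ] : 0 < enorm s <= delta /\ Q s <= eps / 2 * dot s s by split=> //; lra.
case: exits => [[_ [neg [_ [sigma [sigma_ge0 [-> ns]]]]]] |
  [[_ [nneg [nrm [_ [sigma [sigma_ge0 [-> ns]]]]]]] |
  [[_ [nneg [nnrm [res [_ ->]]]]] | [_ [fl _]]]]] //.
- by rewrite ns delta_gt0 lexx; split=> //; apply: cg_obj_bndneg.
- rewrite ns delta_gt0 lexx; split=> //.
  apply: le_trans (cg_obj_bndnorm ndj nrj_gt0 nneg yj_lt nrm sigma_ge0 ns) _.
  by rewrite mulr_ge0 ?divr_ge0 ?dot_ge0 ?ltW.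
- have [y_neq0 Qy] := cg_intres ndj nrj_gt0 nneg res.
  move: nnrm; rewrite /cg_normc => /negP; rewrite -ltNge => /ltW ->.
  by rewrite enorm_gt0 y_neq0 (le_trans Qy) // mulr_ge0 ?divr_ge0 ?dot_ge0 ?ltW.
Qed.

End CGExits.

Lemma card_set_ord (N : nat) (c : nat -> bool) :
  #|[set k : 'I_N | c k]| = (\sum_(0 <= k < N) c k)%N.
Proof.
rewrite -sum1_card big_mkcond /= big_mkord; apply: eq_bigr => i _.
by rewrite inE; case: (c i).
Qed.

Section FailureStreaks.
Variable b : nat -> bool.

Fixpoint fail_streak (m : nat) : nat :=
  if m is m'.+1 then (if b m' then 0 else (fail_streak m').+1) else 0.

Lemma count_failures_le (N : nat) (F : int) :
    (forall m, (m < N)%N -> ~~ b m -> (fail_streak m.+1 : int) <= F) ->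
  let nfail := (\sum_(0 <= k < N) ~~ b k)%N in
  let nsucc := (\sum_(0 <= k < N) b k)%N in
  nfail = 0%N \/ (nfail%:Z <= F * nsucc.+1%:Z)%R.
Proof.
move=> streak_le /=; have [F_lt0|F_ge0] := ltP F 0.
  left; rewrite big_nat big1 // => m /andP[_ mN].
  by apply/eqP; rewrite eqb0; apply/negP => /(streak_le m mN); lia.
have streak_leF m : (m <= N)%N -> (fail_streak m : int) <= F.
  case: m => [//|m mN]; case bm: (b m); first by rewrite /= bm.
  exact: streak_le m mN (negbT bm).
have inv m : (m <= N)%N -> ((\sum_(0 <= k < m) ~~ b k)%N : int)
    <= F * (\sum_(0 <= k < m) b k)%N%:Z + fail_streak m.
  elim: m => [_|m IH mN]; first by rewrite !big_geq //; lia.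
  have {}IH := IH (ltnW mN); have := streak_leF m (ltnW mN).
  rewrite !big_nat_recr //=; case: (b m) => /=; lia.
have [->|_] := posnP (\sum_(0 <= k < N) ~~ b k)%N; [by left | right].
have := inv N (leqnn N); have := streak_leF N (leqnn N); nia.
Qed.

End FailureStreaks.

Lemma radius_streak (R : realType) (b : nat -> bool) (d : nat -> R) (gam dmax : R) N :
  0 <= gam <= 1 -> 0 < d 0%N <= dmax ->
  (forall k, (k < N)%N -> 0 < d k <= dmax -> b k -> 0 < d k.+1 <= dmax) ->
  (forall k, (k < N)%N -> 0 < d k <= dmax -> ~~ b k -> 0 < d k.+1 <= gam * d k) ->
  forall m, (m <= N)%N -> 0 < d m <= gam ^+ fail_streak b m * dmax.
Proof.
move=> /andP[gam_ge0 gam_le1] d0 succ fail.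
have dmax_ge0 : 0 <= dmax by case/andP: d0 => /ltW; apply: le_trans.
elim=> [_|m IH mN]; first by rewrite mul1r.
have /andP[dm_gt0 dm_le] := IH (ltnW mN).
have dm : 0 < d m <= dmax by rewrite dm_gt0 (le_trans dm_le) // ler_piMl ?exprn_ile1.
rewrite /=; case bm: (b m); first by rewrite mul1r succ.
have /andP[-> dm1_le] := fail m mN dm (negbT bm).
by rewrite exprS -mulrA (le_trans dm1_le) // ler_wpM2l.
Qed.

Lemma logbM (R : realType) (b u v : R) : 0 < u -> 0 < v ->
  logb b (u * v) = logb b u + logb b v.
Proof. by move=> u_gt0 v_gt0; rewrite /logb lnM ?posrE // mulrDl. Qed.

Lemma streak_le_floor_logb (R : realType) (gam c : R) (u : nat) :
  0 < gam < 1 -> 0 < c -> c < gam ^+ u -> (u.+1%:Z <= Num.floor (1 + logb gam c))%R.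
Proof.
move=> /andP[gam_gt0 gam_lt1] c_gt0 c_lt.
have lng_lt0 : ln gam < 0 by rewrite ln_lt0 // gam_gt0.
rewrite floor_ge_int; have -> : (u.+1%:~R : R) = u%:R + 1 by rewrite natr1.
rewrite addrC lerD2l /logb; apply: ltW.
by rewrite ltr_ndivlMr // mulr_natl -lnXn // ltr_ln ?posrE ?exprn_gt0.
Qed.

Section TrustRegionIteration.
Variables (R : realType) (n : nat) (P : params R).
Variables (f : 'cV[R]_n -> R) (g : 'cV[R]_n -> 'cV[R]_n) (H : 'cV[R]_n -> 'M[R]_n).
Variables (Lg LH : R) (x : nat -> 'cV[R]_n) (d : nat -> R) (s : nat -> 'cV[R]_n).
Variables (stop : option nat) (U : set 'cV[R]_n).
Hypothesis VP : valid_params P Lg.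
Hypothesis iterate : forall k, completed stop k ->
  iter_completes P f g H (x k) (d k) (s k) (x k.+1) (d k.+1).
Hypothesis LH_gt0 : 0 < LH.
Hypothesis oU : open U.
Hypothesis segU : forall k, completed stop k ->
  forall t : R, 0 <= t <= 1 -> U (x k + t *: s k).
Hypothesis smoothU : forall y, U y ->
  [/\ differentiable f y, forall v, 'd f y v = dot (g y) v,
      differentiable g y & forall v, 'd g y v = H y *m v].
Hypothesis hessian_lip : forall y z, U y -> U z ->
  opnorm_le (H y - H z) (LH * enorm (y - z)).

Local Notation rho_ k := (rho f g H (x k) (s k)).

Lemma step_bounds k : completed stop k -> 0 < d k ->
  0 < enorm (s k) <= d k /\
  eps_H P / 4 * enorm (s k) ^+ 2 <= model_decrease (g (x k)) (H (x k)) (s k).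
Proof.
move=> ck dk_gt0; have [eg_gt0 [eH_gt0 [_ [_ [_ [_ [_ [_ [/andP[z_gt0 _] _]]]]]]]]] := VP.
have Ux : U (x k) by have := segU ck (t := 0); rewrite scale0r addr0 lexx ler01; apply.
have quarter_le r : 0 <= r -> eps_H P / 4 * r <= eps_H P / 2 * r.
  by move=> r_ge0; rewrite ler_wpM2r // ler_pM2l // lef_pV2 ?posrE // ler_nat.
have [[sCG [flag [[cg_nz cg_z] [[use ->]|[_ meo]]]]] _] := iterate ck.
  have gk_neq0 : g (x k) != 0.
    apply/eqP => gk0; have [_ flagE] := cg_z gk0; move: use.
    by rewrite /use_cg flagE gk0 enorm0 ltNge (ltW eg_gt0) => -[|[|[]]].
  have [-> dec] : 0 < enorm sCG <= d k /\
      eps_H P / 2 * enorm sCG ^+ 2 <= model_decrease (g (x k)) (H (x k)) sCG.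
    apply: (cg_step_decrease gk_neq0 (hessian_sym smoothU hessian_lip oU Ux) eH_gt0 dk_gt0
      (ltW z_gt0) (cg_nz gk_neq0)).
    by case: use => [->|[->|[_ ->]]].
  by split=> //; apply: le_trans dec; rewrite quarter_le ?sqr_ge0.
have [v [_ [_ [_ [gs [sHs ns]]]]]] := meo.
rewrite ns dk_gt0 lexx; split=> //.
by move: sHs; rewrite /model_decrease ns; lra.
Qed.

Lemma step_successful k : completed stop k -> 0 < d k ->
  enorm (s k) <= 3 * (1 - eta_acc P) * eps_H P / (2 * LH) -> eta_acc P <= rho_ k.
Proof.
move=> ck dk_gt0 s_le; have [_ [eH_gt0 [_ [_ [_ [_ [_ [/andP[eta_gt0 eta_lt1] _]]]]]]]] := VP.
have [/andP[ns_gt0 _] dec] := step_bounds ck dk_gt0.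
have := taylor_f smoothU hessian_lip (segU ck); rewrite ler_norml => /andP[_ tay].
have md_gt0 : 0 < model_decrease (g (x k)) (H (x k)) (s k).
  by apply: lt_le_trans dec; rewrite mulr_gt0 ?divr_gt0 ?exprn_gt0.
rewrite /rho ler_pdivlMr //; move: dec tay md_gt0 s_le.
rewrite /model_decrease (dotC (s k) (H (x k) *m s k)).
set ns := enorm (s k); move=> dec tay md_gt0 s_le.
have : LH * ns ^+ 3 / 6 <= (1 - eta_acc P) * (eps_H P / 4 * ns ^+ 2).
  move: s_le; rewrite ler_pdivlMr ?mulr_gt0 // => s_le.
  have := ler_wpM2r (_ : 0 <= ns ^+ 2 / 6) s_le; rewrite divr_ge0 ?sqr_ge0 // => /(_ isT).
  by rewrite -[ns ^+ 3]/(ns * ns ^+ 2) => h; lra.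
have : (1 - eta_acc P) * (eps_H P / 4 * ns ^+ 2) <=
    (1 - eta_acc P) * - (dot (g (x k)) (s k) + 1 / 2 * dot (H (x k) *m s k) (s k)).
  by rewrite ler_wpM2l // subr_ge0 ltW.
lra.
Qed.

Lemma radius_after_success k : completed stop k -> 0 < d k <= delta_max P ->
  eta_acc P <= rho_ k -> 0 < d k.+1 <= delta_max P.
Proof.
move=> ck /andP[dk_gt0 dk_le] succ.
have [_ [_ [_ [gam2_ge1 [_ [d0_gt0 [d0_le _]]]]]]] := VP.
have [_ [/(_ succ) [_ ->] _]] := iterate ck; case: ifP => _; last by rewrite dk_gt0.
rewrite ge_min lexx orbT andbT lt_min (lt_le_trans d0_gt0 d0_le) andbT.
by rewrite mulr_gt0 // (lt_le_trans ltr01).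
Qed.

Lemma radius_after_failure k : completed stop k -> 0 < d k ->
  rho_ k < eta_acc P -> 0 < d k.+1 <= gamma1 P * d k.
Proof.
move=> ck dk_gt0 fail; have [_ [_ [/andP[gam1_gt0 _] _]]] := VP.
have [/andP[ns_gt0 ns_le] _] := step_bounds ck dk_gt0.
have [_ [_ /(_ fail) [_ ->]]] := iterate ck.
by rewrite mulr_gt0 //= ler_wpM2l // ltW.
Qed.

Lemma radius_gt_of_failure k : completed stop k -> 0 < d k -> rho_ k < eta_acc P ->
  3 * (1 - eta_acc P) * eps_H P / (2 * LH) < d k.
Proof.
move=> ck dk_gt0; apply: contraTT; rewrite -!leNgt => dk_le.
have [/andP[_ ns_le] _] := step_bounds ck dk_gt0.
exact: step_successful ck dk_gt0 (le_trans ns_le dk_le).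
Qed.

Lemma radius_along_run N : d 0%N = delta0 P -> (forall k, (k < N)%N -> completed stop k) ->
  forall m, (m <= N)%N ->
  0 < d m <= gamma1 P ^+ fail_streak (fun k => eta_acc P <= rho_ k) m * delta_max P.
Proof.
move=> d0E compN; have [_ [_ [/andP[gam1_gt0 gam1_lt1] [_ [_ [d0_gt0 [d0_le _]]]]]]] := VP.
apply: radius_streak => [||k kN dk|k kN /andP[dk_gt0 _]].
- by rewrite !ltW.
- by rewrite d0E d0_gt0.
- exact: radius_after_success (compN k kN) dk.
- by rewrite -ltNge; apply: radius_after_failure (compN k kN) dk_gt0.
Qed.

End TrustRegionIteration.

Theorem lemma4p5 (R : realType) (n : nat) (P : params R)
    (f : 'cV[R]_n -> R) (g : 'cV[R]_n -> 'cV[R]_n) (H : 'cV[R]_n -> 'M[R]_n)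
    (Lg LH : R) (x0 : 'cV[R]_n)
    (x : nat -> 'cV[R]_n) (d : nat -> R) (s : nat -> 'cV[R]_n) (stop : option nat) :
  valid_params P Lg ->
  alg4_run P f g H x0 x d s stop ->
  standing_assumption f g H x s stop Lg LH ->
  forall N : nat, (forall k : nat, (k < N)%N -> completed stop k) ->
  let nU := #|[set k : 'I_N | rho f g H (x k) (s k) < eta_acc P]| in
  let nS := #|[set k : 'I_N | eta_acc P <= rho f g H (x k) (s k)]| in
  nU = 0%N \/
  (nU%:Z <= Num.floor (1 + logb (gamma1 P) (3 * (1 - eta_acc P) / (2 * LH * delta_max P))
                        + logb (gamma1 P) (eps_H P)) * (nS.+1)%:Z)%R.
Proof.
move=> VP [_ [d0E [iterate _]]] [_ [LH_gt0 [_ [U [oU [segU [smooth [_ hlip]]]]]]]].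
move=> N compN nU nS.
have smoothU y : U y -> [/\ differentiable f y, forall v, 'd f y v = dot (g y) v,
    differentiable g y & forall v, 'd g y v = H y *m v].
  by case/smooth => ? [? [? [? _]]]; split.
have [_ [eH_gt0 [/andP[gam1_gt0 gam1_lt1] [_ [_ [d0_gt0 [d0_le [/andP[_ eta_lt1] _]]]]]]]] := VP.
have dmax_gt0 : 0 < delta_max P := lt_le_trans d0_gt0 d0_le.
pose succ k := eta_acc P <= rho f g H (x k) (s k).
have -> : nU = (\sum_(0 <= k < N) ~~ succ k)%N.
  by rewrite /nU -card_set_ord; apply: eq_card => k; rewrite !inE ltNge.
rewrite /nS (card_set_ord N succ) -addrA -logbM ?mulr_gt0 ?invr_gt0 ?mulr_gt0 ?subr_gt0 //.
apply: count_failures_le => m mN fail_m.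
have /andP[dm_gt0 dm_le] := radius_along_run VP iterate oU segU smoothU hlip d0E compN (ltnW mN).
have := radius_gt_of_failure VP iterate LH_gt0 oU segU smoothU hlip (compN m mN) dm_gt0.
rewrite ltNge => /(_ fail_m) /lt_le_trans /(_ dm_le) T_lt.
rewrite /= (negbTE fail_m); apply: streak_le_floor_logb; first by rewrite gam1_gt0.
  by rewrite mulr_gt0 ?divr_gt0 ?mulr_gt0 ?subr_gt0.
rewrite -(ltr_pM2r dmax_gt0) -mulrA; apply: le_lt_trans T_lt.
by rewrite le_eqVlt; apply/orP; left; apply/eqP; field; rewrite !gt_eqF.
Qed.
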